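(* Let $(S,|\cdot|)$ be a finite metric space, let $f\ge1$ be an integer, and let $\varepsilon>0$ be a real number. Assume there exists a well-separated pair decomposition for $S$ with separation ratio $c=2+4/\varepsilon$, and let $m$ be its size. Then the graph $G=(S,E)$ constructed from this decomposition as described in the context is an $f$-faulty-degree $(1+\varepsilon)$-spanner for $S$ that has at most $(2f+1)^2m$ edges.
   Context: $K_S$ is the complete graph on $S$; all graphs on $S$ have edge weights $|pq|$; $\delta_X$ is shortest-path distance in $X$; $X\setminus F$ is $X$ with the edges of $F$ removed. A graph $G=(S,E)$ is an $f$-faulty-degree $t$-spanner for $S$ if for every $F\subseteq E$ with $(S,F)$ of maximum degree at most $f$ and all $p,q\in S$, $\delta_{G\setminus F}(p,q)\le t\,\delta_{K_S\setminus F}(p,q)$. For non-empty $A,B\subseteq S$: $|AB|=\min\{|pq|:p\in A,q\in B\}$, $\mathrm{diam}(A)=\max\{|pq|:p,q\in A\}$; $A,B$ are well-separated with respect to $c>0$ if $|AB|\ge c\max(\mathrm{diam}(A),\mathrm{diam}(B))$. A well-separated pair decomposition (WSPD) of $S$ with separation ratio $c$ is a sequence $\{A_1,B_1\},\dots,\{A_m,B_m\}$ of pairs of non-empty subsets of $S$ such that each $A_i,B_i$ are well-separated w.r.t. $c$, and for any two distinct $p,q\in S$ there is exactly one $i$ with ($p\in A_i$ and $q\in B_i$) or ($p\in B_i$ and $q\in A_i$); $m$ is its size. Construction of $G$: for each $i$, let $A_i'=A_i$ if $|A_i|\le 2f+1$ and otherwise let $A_i'$ be an arbitrary subset of $A_i$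 of size $2f+1$; define $B_i'$ from $B_i$ analogously. $E$ consists of all edges $\{x,y\}$ with $x\in A_i'$, $y\in B_i'$, over all $i=1,\dots,m$. *)

From HB Require Import structures.
From mathcomp Require Import all_boot all_order all_algebra.
From mathcomp Require Import reals constructive_ereal ereal.
Set Implicit Arguments. Unset Strict Implicit. Unset Printing Implicit Defensive.
Import Order.TTheory GRing.Theory Num.Theory.
Local Open Scope ring_scope.

Section Defs.
Variables (R : realType) (T : finType) (d : T -> T -> R).

Definition is_metric : Prop :=
  [/\ forall x y, d x y = 0 <-> x = y,
      forall x y, d x y = d y x &
      forall x y z, d x z <= d x y + d y z].

Definition complete_edges : {set {set T}} := [set e : {set T} | #|e| == 2%N].

Fixpoint walk_weight (p : T) (s : seq T) : R :=
  match s with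
  | [::] => 0
  | y :: s' => d p y + walk_weight y s'
  end.

Definition is_walk (X : {set {set T}}) (p q : T) (s : seq T) : bool :=
  path (fun u v => [set u; v] \in X) p s && (last p s == q).

(* shortest-path distance delta_X(p,q) (= +oo if no path) *)
Definition sp_dist (X : {set {set T}}) (p q : T) : \bar R :=
  ereal_inf (fun x : \bar R => exists s, is_walk X p q s /\ x = (walk_weight p s)%:E).

Definition max_deg_le (F : {set {set T}}) (f : nat) : Prop :=
  forall v : T, (#|[set e in F | v \in e]| <= f)%N.

Definition faulty_degree_spanner (E : {set {set T}}) (f : nat) (t : R) : Prop :=
  forall F : {set {set T}}, F \subset E -> max_deg_le F f ->
    forall p q : T,
      (sp_dist (E :\: F) p q <= t%:E * sp_dist (complete_edges :\: F) p q)%E.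

Definition diam (A : {set T}) : R := \big[Num.max/0]_(p in A) \big[Num.max/0]_(q in A) d p q.

Definition set_dist (A B : {set T}) : R :=
  \big[Num.min/diam [set: T]]_(p in A) \big[Num.min/diam [set: T]]_(q in B) d p q.

Definition well_separated (c : R) (A B : {set T}) : Prop :=
  set_dist A B >= c * Num.max (diam A) (diam B).

Definition is_wspd (c : R) (m : nat) (A B : 'I_m -> {set T}) : Prop :=
  [/\ forall i, A i != set0,
      forall i, B i != set0,
      forall i, well_separated c (A i) (B i) &
      forall p q : T, p != q ->
        #|[set i : 'I_m | ((p \in A i) && (q \in B i)) || ((p \in B i) && (q \in A i))]| = 1%N].

Definition truncation (f : nat) (m : nat) (A A' : 'I_m -> {set T}) : Prop :=
  forall i, if (#|A i| <= f.*2.+1)%N then A' i = A i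
            else (A' i \subset A i) /\ #|A' i| = f.*2.+1.

Definition wspd_edges (m : nat) (A' B' : 'I_m -> {set T}) : {set {set T}} :=
  [set e : {set T} | [exists i : 'I_m, exists x in A' i, exists y in B' i,
                        (x != y) && (e == [set x; y])]].

End Defs.

From HB Require Import structures.
From mathcomp Require Import all_boot all_order all_algebra.
From mathcomp Require Import reals constructive_ereal ereal.
From mathcomp Require Import ring lra.
Set Implicit Arguments. Unset Strict Implicit. Unset Printing Implicit Defensive.
Import Order.TTheory GRing.Theory Num.Theory.
Local Open Scope ring_scope.

(* It suffices that every pair {p, q} outside F is joined in E \ F by a walk
   of weight at most (1 + eps)|pq|: replacing each edge of a walk of K_S \ F
   by such a walk gives the spanner inequality.  We prove this by induction on
   |pq|.  Let {A_i, B_i} be the pair separating p and q and D the larger of the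
   two diameters, so that (2 + 4/eps) D <= |pq|, i.e. (4 + 2 eps) D <= eps |pq|.
   A truncated set missing p has 2f + 1 points, and F has maximum degree f, so
   we can pick x in A'_i and y in B'_i (with x = p, y = q when possible) such
   that {p, x}, {x, y}, {y, q} avoid F.  Then {x, y} is in E, |px|, |yq| <= D
   < |pq|, and the induction hypothesis yields a walk of weight at most
   2(1 + eps) D + (|pq| + 2D) <= (1 + eps)|pq|. *)

Section StrongInduction.
Variables (R : numDomainType) (T : finType) (d : T -> T -> R).

Lemma dist_ind (P : T -> T -> Prop) :
  (forall p q, (forall a b, d a b < d p q -> P a b) -> P p q) ->
  forall p q, P p q.
Proof.
move=> IH; suff ind n p q : (#|[set u : T * T | (d u.1 u.2 < d p q)%R]| < n)%N -> P p q.
  by move=> p q; exact: ind (ltnSn _).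
elim: n p q => [//|n IHn] p q hn; apply: IH => a b ab; apply: IHn.
rewrite ltnS in hn; apply: leq_trans hn; apply: proper_card; apply/properP; split.
  by apply/subsetP => u; rewrite !inE => /lt_trans; apply.
by exists (a, b); rewrite !inE //= ltxx.
Qed.

End StrongInduction.

Section Faults.
Variables (T : finType) (F : {set {set T}}) (f : nat).
Hypothesis hF : max_deg_le F f.

Lemma card_fault_nbrs v (Z : {set T}) : v \notin Z ->
  (#|[set z in Z | [set v; z] \in F]| <= f)%N.
Proof.
move=> vZ; rewrite -(@card_in_imset _ _ (fun z => [set v; z])); last first.
  move=> z1 z2; rewrite !inE => /andP[z1Z _] /andP[z2Z _] e.
  have : z1 \in [set v; z2] by rewrite -e set22.
  by rewrite !inE => /orP[/eqP z1v|/eqP //]; move: vZ; rewrite -z1v z1Z.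
apply: leq_trans (hF v); apply: subset_leq_card; apply/subsetP => e.
by case/imsetP => z; rewrite inE => /andP[_ zF] ->; rewrite inE zF set21.
Qed.

Lemma exists_common_fault_free_nbr u v (Z : {set T}) :
  u \notin Z -> v \notin Z -> (f.*2 < #|Z|)%N ->
  exists2 z, z \in Z & ([set u; z] \notin F) && ([set v; z] \notin F).
Proof.
move=> uZ vZ hZ.
set U := [set z in Z | [set u; z] \in F] :|: [set z in Z | [set v; z] \in F].
have cardU : (#|U| <= f.*2)%N.
  apply: leq_trans (leq_card_setU _ _) _; rewrite -addnn.
  by apply: leq_add; exact: card_fault_nbrs.
have [/subset_leq_card ZU|/subsetPn[z zZ zU]] := boolP (Z \subset U).
  by move: hZ; rewrite ltnNge (leq_trans ZU cardU).
by exists z => //; move: zU; rewrite !inE zZ /= negb_or.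
Qed.

Lemma exists_fault_free_endpoint r u (Z : {set T}) :
  r \in Z \/ (f.*2 < #|Z|)%N -> u \notin Z -> [set u; r] \notin F ->
  exists2 z, z \in Z & (r = z \/ [set r; z] \notin F) /\ [set u; z] \notin F.
Proof.
move=> hZ uZ urF; have [rZ|rZ] := boolP (r \in Z); first by exists r; auto.
have [|z zZ /andP[rzF uzF]] := exists_common_fault_free_nbr rZ uZ.
  by case: hZ => //; rewrite (negbTE rZ).
by exists z; auto.
Qed.

End Faults.

Section Walks.
Variables (R : realType) (T : finType) (d : T -> T -> R).

Definition stretch_walk (X : {set {set T}}) (t : R) (p q : T) : Prop :=
  exists2 s, is_walk X p q s & walk_weight d p s <= t * d p q.

Lemma walk_weight_cat p s1 s2 :
  walk_weight d p (s1 ++ s2) = walk_weight d p s1 + walk_weight d (last p s1) s2.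
Proof. by elim: s1 p => [|y s IH] p /=; rewrite ?add0r // IH addrA. Qed.

Lemma is_walk_cat (X : {set {set T}}) p x q s1 s2 :
  is_walk X p x s1 -> is_walk X x q s2 -> is_walk X p q (s1 ++ s2).
Proof.
case/andP=> ps1 /eqP ls1 /andP[ps2 ls2].
by rewrite /is_walk cat_path last_cat ls1 ps1 ps2.
Qed.

Lemma is_walk_edge (X : {set {set T}}) x y : [set x; y] \in X -> is_walk X x y [:: y].
Proof. by move=> xy; rewrite /is_walk /= xy eqxx. Qed.

Lemma lift_walk (X Y : {set {set T}}) t :
    (forall a b, [set a; b] \in Y -> stretch_walk X t a b) ->
  forall s p q, is_walk Y p q s ->
  exists2 s', is_walk X p q s' & walk_weight d p s' <= t * walk_weight d p s.
Proof.
move=> hY; elim=> [|y s IHs] p q.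
  by case/andP=> _ /= /eqP <-; exists [::]; rewrite /is_walk ?eqxx ?mulr0.
case/andP=> /= /andP[py ps] lq.
have [s1 ws1 w1] := hY _ _ py.
have ws : is_walk Y y q s by apply/andP.
have [s2 ws2 w2] := IHs y q ws.
exists (s1 ++ s2); first exact: is_walk_cat ws1 ws2.
rewrite walk_weight_cat mulrDr.
by case/andP: ws1 => _ /eqP ->; exact: lerD.
Qed.

Lemma sp_dist_le_of_stretch_edges (X Y : {set {set T}}) t : 0 < t ->
    (forall a b, [set a; b] \in Y -> stretch_walk X t a b) ->
  forall p q, (sp_dist d X p q <= t%:E * sp_dist d Y p q)%E.
Proof.
move=> t0 hY p q; rewrite /sp_dist -ereal_inf_pZl //.
apply: le_ereal_inf_tmp => _ [_ [s [ws ->]] <-].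
have [s' ws' w'] := lift_walk hY ws.
by apply: ge_ereal_inf; exists (walk_weight d p s')%:E; [exists s' | rewrite -EFinM lee_fin].
Qed.

End Walks.

Lemma detour_weight_le (R : realFieldType) (eps D L w1 w2 e : R) :
  0 < eps -> (2 + 4 / eps) * D <= L ->
  w1 <= (1 + eps) * D -> w2 <= (1 + eps) * D -> e <= L + 2 * D ->
  w1 + (e + w2) <= (1 + eps) * L.
Proof.
move=> eps0 sep w1D w2D eL.
have sep' : (4 + 2 * eps) * D <= eps * L.
  have -> : 4 + 2 * eps = eps * (2 + 4 / eps) by field; rewrite gt_eqF.
  by rewrite -mulrA ler_wpM2l // ltW.
lra.
Qed.

Section Metric.
Variables (R : realType) (T : finType) (d : T -> T -> R).
Hypothesis hd : is_metric d.

Lemma metric_refl x : d x x = 0.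
Proof. by case: hd => h _ _; apply/(h x x). Qed.

Lemma metric_sym x y : d x y = d y x.
Proof. by case: hd. Qed.

Lemma metric_tri x y z : d x z <= d x y + d y z.
Proof. by case: hd. Qed.

Lemma metric_ge0 x y : 0 <= d x y.
Proof. by have := metric_tri x y x; rewrite metric_refl (metric_sym y x); lra. Qed.

Lemma metric_gt0 x y : x != y -> 0 < d x y.
Proof.
move=> xy; rewrite lt_def metric_ge0 andbT; apply: contra xy => /eqP.
by case: hd => h _ _ /h ->.
Qed.

Lemma stretch_walk_refl X t p : stretch_walk d X t p p.
Proof. by exists [::]; rewrite /is_walk ?eqxx //= metric_refl mulr0. Qed.

End Metric.

Section Diameter.
Variables (R : realType) (T : finType) (d : T -> T -> R).

Lemma diam_ge (A : {set T}) : {in A &, forall u v, d u v <= diam d A}.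
Proof. by move=> u v uA vA; apply: (bigmax_sup u) => //; apply: (bigmax_sup v). Qed.

Lemma set_dist_le (A B : {set T}) u v : u \in A -> v \in B -> set_dist d A B <= d u v.
Proof. by move=> uA vB; apply: (bigmin_inf u) => //; apply: (bigmin_inf v). Qed.

End Diameter.

Section SeparatedPair.
Variables (R : realType) (T : finType) (d : T -> T -> R).
Hypothesis hd : is_metric d.
Variables (E F : {set {set T}}) (f : nat) (eps : R).
Hypotheses (hF : max_deg_le F f) (heps : 0 < eps).
Variables (p q : T) (X Y X' Y' : {set T}) (D : R).
Hypotheses (pq : p != q) (pqF : [set p; q] \notin F).
Hypotheses (pX : p \in X) (qY : q \in Y) (sX : X' \subset X) (sY : Y' \subset Y).
Hypotheses (hX' : p \in X' \/ (f.*2 < #|X'|)%N) (hY' : q \in Y' \/ (f.*2 < #|Y'|)%N).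
Hypotheses (dX : {in X &, forall u v, d u v <= D}) (dY : {in Y &, forall u v, d u v <= D}).
Hypothesis sep : (2 + 4 / eps) * D <= d p q.
Hypothesis hE : {in X' & Y', forall x y, x != y -> [set x; y] \in E}.
Hypothesis IH : forall a b, d a b < d p q -> [set a; b] \notin F ->
  stretch_walk d (E :\: F) (1 + eps) a b.

Lemma sep_bound_ge0 : 0 <= D.
Proof. by have := dX pX pX; rewrite metric_refl. Qed.

Lemma sep_bound_lt : D < d p q.
Proof.
have := metric_gt0 hd pq; have := sep_bound_ge0.
have : 0 <= 4 / eps * D by rewrite mulr_ge0 ?divr_ge0 ?sep_bound_ge0 ?ltW.
by move: sep; rewrite mulrDl; lra.
Qed.

Lemma sep_disjoint z : z \in X -> z \notin Y.
Proof.
move=> zX; apply/negP => zY.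
have dpq : d p q <= 2 * D.
  by apply: le_trans (metric_tri hd p z q) _; have := dX pX zX; have := dY zY qY; lra.
have : 4 / eps * D <= 0 by move: sep; rewrite mulrDl; lra.
rewrite pmulr_rle0 ?divr_gt0 // => D0.
by have := metric_gt0 hd pq; lra.
Qed.

Lemma exists_fault_free_link : exists x y,
  [/\ x \in X', y \in Y', p = x \/ [set p; x] \notin F,
      q = y \/ [set q; y] \notin F & [set x; y] \notin F].
Proof.
have qX' : q \notin X' := contra (subsetP sX q) (contraL (@sep_disjoint q) qY).
have qpF : [set q; p] \notin F by rewrite setUC.
have [x xX' [px qxF]] := exists_fault_free_endpoint hF hX' qX' qpF.
have xY' : x \notin Y' := contra (subsetP sY x) (sep_disjoint (subsetP sX x xX')).
have xqF : [set x; q] \notin F by rewrite setUC.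
have [y yY' [qy xyF]] := exists_fault_free_endpoint hF hY' xY' xqF.
by exists x, y.
Qed.

Lemma stretch_walk_near a b : d a b <= D -> a = b \/ [set a; b] \notin F ->
  stretch_walk d (E :\: F) (1 + eps) a b.
Proof.
move=> abD [<-|abF]; first exact: stretch_walk_refl.
by apply: IH abF; apply: le_lt_trans abD sep_bound_lt.
Qed.

Lemma stretch_walk_separated : stretch_walk d (E :\: F) (1 + eps) p q.
Proof.
have [x [y [xX' yY' px qy xyF]]] := exists_fault_free_link.
have xX : x \in X by exact: (subsetP sX).
have yY : y \in Y by exact: (subsetP sY).
have xy : x != y by apply: contraTneq yY => <-; exact: sep_disjoint.
have [s1 ws1 w1] := stretch_walk_near (dX pX xX) px.
have [s2 ws2 w2] : stretch_walk d (E :\: F) (1 + eps) y q.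
  apply: stretch_walk_near (dY yY qY) _.
  by case: qy => [->|qyF]; [left|rewrite setUC; right].
exists (s1 ++ y :: s2).
  apply: is_walk_cat ws1 (is_walk_cat (is_walk_edge _) ws2).
  by rewrite in_setD xyF hE.
rewrite walk_weight_cat /=; case/andP: ws1 => _ /eqP ->.
have dxy : d x y <= d p q + 2 * D.
  have := metric_tri hd x p y; have := metric_tri hd p q y.
  rewrite (metric_sym hd x p) (metric_sym hd q y).
  by have := dX pX xX; have := dY yY qY; lra.
have eps1 : 0 <= 1 + eps by rewrite addr_ge0 // ltW.
apply: detour_weight_le sep _ _ dxy => //.
- by apply: le_trans w1 _; rewrite ler_wpM2l // dX.
- by apply: le_trans w2 _; rewrite ler_wpM2l // dY.
Qed.

End SeparatedPair.

Section Truncation.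
Variables (T : finType) (f m : nat) (C C' : 'I_m -> {set T}).
Hypothesis hC : truncation f C C'.

Lemma truncation_sub i : C' i \subset C i.
Proof. by have := hC i; case: ifP => [_ ->|_ []]. Qed.

Lemma truncation_card i : (#|C' i| <= f.*2.+1)%N.
Proof. by have := hC i; case: ifP => [? ->|_ [_ ->]]. Qed.

Lemma truncation_memVbig i p : p \in C i -> p \in C' i \/ (f.*2 < #|C' i|)%N.
Proof.
by move=> pC; have := hC i; case: ifP => [_ ->|_ [_ ->]]; [left|right].
Qed.

End Truncation.

Lemma mem_wspd_edges (T : finType) m (A' B' : 'I_m -> {set T}) i x y :
  x \in A' i -> y \in B' i -> x != y -> [set x; y] \in wspd_edges A' B'.
Proof.
move=> xA yB xy; rewrite inE; apply/existsP; exists i.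
by apply/existsP; exists x; rewrite xA; apply/existsP; exists y; rewrite yB xy eqxx.
Qed.

Lemma leq_card_bigcup (I T : finType) (S : I -> {set T}) :
  (#|\bigcup_i S i| <= \sum_i #|S i|)%N.
Proof.
elim/big_rec2: _ => [|i X n _ le_Xn]; first by rewrite cards0.
by apply: leq_trans (leq_card_setU _ _) _; rewrite leq_add2l.
Qed.

Lemma card_wspd_edges_le (T : finType) m (A' B' : 'I_m -> {set T}) :
  (#|wspd_edges A' B'| <= \sum_(i < m) #|A' i| * #|B' i|)%N.
Proof.
have sub : wspd_edges A' B' \subset
    \bigcup_(i < m) [set [set x; y] | x in A' i, y in B' i].
  apply/subsetP => e; rewrite inE => /existsP[i /existsP[x /andP[xA]]].
  move=> /existsP[y /andP[yB /andP[_ /eqP ->]]].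
  by apply/bigcupP; exists i => //; apply/imset2P; exists x y.
apply: leq_trans (subset_leq_card sub) _; apply: leq_trans (leq_card_bigcup _) _.
apply: leq_sum => i _; rewrite curry_imset2X -cardsX; exact: leq_imset_card.
Qed.

Lemma wspd_stretch_walk (R : realType) (T : finType) (d : T -> T -> R)
    (hd : is_metric d) (f m : nat) (A B A' B' : 'I_m -> {set T}) (eps : R)
    (heps : 0 < eps) (hW : is_wspd d (2 + 4 / eps) A B)
    (hA' : truncation f A A') (hB' : truncation f B B')
    (F : {set {set T}}) (hF : max_deg_le F f) (p q : T) :
  [set p; q] \notin F -> stretch_walk d (wspd_edges A' B' :\: F) (1 + eps) p q.
Proof.
move: p q; apply: (@dist_ind _ _ d (fun p q => _ -> stretch_walk _ _ _ p q)).
move=> p q IH pqF; have [<-|pq] := eqVneq p q; first exact: stretch_walk_refl.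
case: hW => _ _ hws hpart.
have : (0 < #|[set i : 'I_m | ((p \in A i) && (q \in B i)) ||
                             ((p \in B i) && (q \in A i))]|)%N by rewrite hpart.
case/card_gt0P => i; rewrite inE.
set D := Num.max (diam d (A i)) (diam d (B i)).
have dA : {in A i &, forall u v, d u v <= D} by move=> u v uA vA; rewrite le_max diam_ge.
have dB : {in B i &, forall u v, d u v <= D}.
  by move=> u v uB vB; rewrite le_max orbC diam_ge.
have edgeAB : {in A' i & B' i, forall x y, x != y -> [set x; y] \in wspd_edges A' B'}.
  by move=> x y xA yB; exact: mem_wspd_edges xA yB.
have edgeBA : {in B' i & A' i, forall x y, x != y -> [set x; y] \in wspd_edges A' B'}.
  by move=> x y xB yA xy; rewrite setUC (mem_wspd_edges yA xB) // eq_sym.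
case/orP=> [/andP[pA qB]|/andP[pB qA]].
- have sep : (2 + 4 / eps) * D <= d p q by exact: le_trans (hws i) (set_dist_le d pA qB).
  exact: (stretch_walk_separated hd hF heps pq pqF pA qB (truncation_sub hA' i)
    (truncation_sub hB' i) (truncation_memVbig hA' pA) (truncation_memVbig hB' qB)
    dA dB sep edgeAB IH).
- have sep : (2 + 4 / eps) * D <= d p q.
    by rewrite metric_sym //; exact: le_trans (hws i) (set_dist_le d qA pB).
  exact: (stretch_walk_separated hd hF heps pq pqF pB qA (truncation_sub hB' i)
    (truncation_sub hA' i) (truncation_memVbig hB' pB) (truncation_memVbig hA' qA)
    dB dA sep edgeBA IH).
Qed.

Theorem theorem3 (R : realType) (T : finType) (d : T -> T -> R)
  (hd : is_metric d) (f : nat) (hf : (1 <= f)%N) (eps : R) (heps : 0 < eps)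
  (m : nat) (A B A' B' : 'I_m -> {set T})
  (hW : is_wspd d (2 + 4 / eps) A B)
  (hA' : truncation f A A') (hB' : truncation f B B') :
  faulty_degree_spanner d (wspd_edges A' B') f (1 + eps) /\
  (#|wspd_edges A' B'| <= (f.*2.+1) ^ 2 * m)%N.
Proof.
split.
  move=> F _ hF; apply: sp_dist_le_of_stretch_edges; first by rewrite addr_gt0.
  move=> p q; rewrite in_setD => /andP[pqF _].
  exact: (wspd_stretch_walk hd heps hW hA' hB' hF pqF).
apply: leq_trans (card_wspd_edges_le A' B') _.
apply: (@leq_trans (\sum_(i < m) f.*2.+1 ^ 2)).
  by apply: leq_sum => i _; exact: leq_mul (truncation_card hA' i) (truncation_card hB' i).
by rewrite sum_nat_const card_ord mulnC.
Qed.
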